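(* Let $s$ be a Sturmian word with a factorization $s=U_1U_2\cdots U_n\cdots$ into non-empty factors $U_i$ of $s$. If $r_s(U_i)=r_s(U_j)$ for all $i,j\ge 1$, then for every $M>0$ there exists an index $i$ with $|U_i|>M$.
   Context: A Sturmian word is an infinite word $s\in\{a,b\}^{\omega}$ that is aperiodic (not ultimately periodic) and balanced: for all factors $u,v$ of $s$ with $|u|=|v|$ one has $||u|_x-|v|_x|\le 1$ for $x\in\{a,b\}$, where $|u|_x$ is the number of occurrences of $x$ in $u$. A non-empty factor $w$ of $s$ is rich in the letter $z\in\{a,b\}$ if there is a factor $v$ of $s$ with $|v|=|w|$ and $|w|_z>|v|_z$; every non-empty factor of a Sturmian word is rich in exactly one letter, and $r_s(w)\in\{a,b\}$ denotes that letter. *)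

From Stdlib Require Import ClassicalEpsilon.
From HB Require Import structures.
From mathcomp Require Import all_boot.
Set Implicit Arguments. Unset Strict Implicit. Unset Printing Implicit Defensive.

Inductive letter := la | lb.
Definition letter_eqb (x y : letter) : bool :=
  match x, y with la, la | lb, lb => true | _, _ => false end.
Lemma letter_eqP : Equality.axiom letter_eqb.
Proof. by case; case; constructor. Qed.
HB.instance Definition _ := hasDecEq.Build letter letter_eqP.

Definition infword := nat -> letter.

Definition factor_at (s : infword) (k n : nat) : seq letter :=
  [seq s (k + i) | i <- iota 0 n].

Definition is_factor (s : infword) (w : seq letter) : Prop :=
  exists k, w = factor_at s k (size w).

Definition occ (x : letter) (u : seq letter) : nat := count_mem x u.

Definition ult_periodic (s : infword) : Prop :=
  exists p N, 0 < p /\ forall n, N <= n -> s (n + p) = s n.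

Definition balanced (s : infword) : Prop :=
  forall u v x, is_factor s u -> is_factor s v -> size u = size v ->
    occ x u <= (occ x v).+1 /\ occ x v <= (occ x u).+1.

Definition sturmian (s : infword) : Prop := ~ ult_periodic s /\ balanced s.

Definition rich (s : infword) (z : letter) (w : seq letter) : Prop :=
  exists v, is_factor s v /\ size v = size w /\ occ z v < occ z w.

(* r_s(w): the letter in which w is rich (well defined for non-empty factors
   of a Sturmian word, where it is unique). *)
Definition r_s (s : infword) (w : seq letter) : letter :=
  epsilon (inhabits la) (fun z => rich s z w).

(* s = U_0 U_1 U_2 ... : the concatenation of the U_i equals s. *)
Definition start_pos (U : nat -> seq letter) (i : nat) : nat :=
  \sum_(j < i) size (U j).

Definition is_factorization (s : infword) (U : nat -> seq letter) : Prop :=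
  forall i k, k < size (U i) -> nth la (U i) k = s (start_pos U i + k).

From mathcomp Require Import all_boot zify.
From Stdlib Require Import Classical ClassicalEpsilon.

Set Implicit Arguments.
Unset Strict Implicit.

(* Let x be the common letter r_s(U_i) and suppose, for a contradiction, that
   every |U_i| is at most M.  A position q is "light" for an x-rich factor w
   when the window of length |w| starting at q contains fewer x's than w;
   by balance every other window of that length contains exactly |w|_x x's.
   1. Cutting two windows of equal length into corresponding blocks: if the
      blocks of the first never contain more x's than those of the second and
      two of them contain strictly fewer, the windows differ by 2 in x-count,
      contradicting balance ([no_two_deficits]).
   2. Aperiodicity makes light positions unbounded; two of them are congruent
      modulo |w|, and step 1 then shows that light positions occur in every
      interval of some fixed length G ([light_syndetic]).  Only finitely many
      lengths |U_i| <= M occur, so one G serves all U_i at once.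
   3. In each block U_i pick a light offset d_i < G.  Two indices i < j share
      the same offset d; comparing the prefix U_0...U_j with the window at d,
      step 1 gives the final contradiction. *)

Lemma occ_cat x u v : occ x (u ++ v) = occ x u + occ x v.
Proof. by rewrite /occ count_cat. Qed.

Lemma letter_eq_compare (a b x : letter) : (a == x) = (b == x) -> a = b.
Proof. by case: a; case: b; case: x. Qed.

Lemma occ_la_lb u : occ la u + occ lb u = size u.
Proof. by rewrite /occ; elim: u => [|[] u IH] //=; rewrite ?addSn ?addnS IH. Qed.

Lemma sum_two_strict (a b : nat -> nat) K i j :
  (forall t, t < K -> a t <= b t) -> i < j -> j < K ->
  a i < b i -> a j < b j -> \sum_(t < K) a t + 2 <= \sum_(t < K) b t.
Proof.
move=> le_ab lt_ij lt_jK lt_i lt_j.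
have indicator k : k < K -> \sum_(t < K) (t == k :> nat) = 1.
  move=> lt_kK; rewrite (bigD1 (Ordinal lt_kK)) //= eqxx big1 // => t.
  by rewrite -val_eqE /= => /negbTE ->.
rewrite -[2]/(1 + 1) -{1}(indicator i) ?(ltn_trans lt_ij) // -(indicator j) //.
rewrite addnA -!big_split /=.
apply: leq_sum => t _; have := le_ab t (ltn_ord t).
have [->|_] := eqVneq (val t) i; first by rewrite ltn_eqF //=; lia.
by case: eqP => [->|_] /=; lia.
Qed.

Lemma pigeonhole (G : nat) (f : nat -> nat) :
  (forall i, i <= G -> f i < G) -> exists i j, i < j <= G /\ f i = f j.
Proof.
move=> f_lt; apply: NNPP => all_distinct.
pose F (i : 'I_G.+1) : 'I_G := Ordinal (f_lt i (ltn_ord i)).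
have F_inj : injective F.
  move=> i j /(congr1 val) /= eq_f; apply: val_inj => /=.
  have le_G (k : 'I_G.+1) : k <= G by rewrite -ltnS ltn_ord.
  case: (ltngtP i j) => // [lt_ij|lt_ji]; exfalso; apply: all_distinct.
  - by exists i, j; rewrite lt_ij le_G.
  - by exists j, i; rewrite lt_ji le_G.
by have := leq_card F F_inj; rewrite !card_ord ltnn.
Qed.

Section Windows.
Variable s : infword.

Lemma size_factor_at k n : size (factor_at s k n) = n.
Proof. by rewrite /factor_at size_map size_iota. Qed.

Lemma factor_at_is_factor k n : is_factor s (factor_at s k n).
Proof. by exists k; rewrite size_factor_at. Qed.

Lemma factor_at_cat q a b :
  factor_at s q (a + b) = factor_at s q a ++ factor_at s (q + a) b.
Proof.
rewrite /factor_at iotaD map_cat add0n; congr (_ ++ _).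
by rewrite -[a in iota a]addn0 iotaDl -map_comp; apply: eq_map => i /=; rewrite addnA.
Qed.

Lemma occ_slide x k n :
  occ x (factor_at s k.+1 n) + (s k == x) = occ x (factor_at s k n) + (s (k + n) == x).
Proof.
have := congr1 (occ x) (factor_at_cat k 1 n).
rewrite addnC factor_at_cat addn1 !occ_cat /occ /factor_at /= !addn0.
lia.
Qed.

Lemma occ_blocks x (V : nat -> seq letter) q K :
  occ x (factor_at s q (start_pos V K)) =
  \sum_(t < K) occ x (factor_at s (q + start_pos V t) (size (V t))).
Proof.
elim: K => [|K IH]; first by rewrite /start_pos !big_ord0.
by rewrite big_ord_recr -IH /= {1}/start_pos big_ord_recr factor_at_cat occ_cat.
Qed.

Lemma constant_windows_periodic x n N c : 0 < n ->
  (forall q, N <= q -> occ x (factor_at s q n) = c) -> ult_periodic s.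
Proof.
move=> n_gt0 const; exists n, N; split => // k le_Nk.
apply: (@letter_eq_compare _ _ x); have := occ_slide x k n.
rewrite !const ?(leqW le_Nk) //.
by case: (s (k + n) == x); case: (s k == x) => /=; lia.
Qed.

Hypothesis s_balanced : balanced s.

Lemma rich_max x w q : rich s x w -> occ x (factor_at s q (size w)) <= occ x w.
Proof.
move=> [v [v_factor [size_v lt_v]]].
have size_eq : size (factor_at s q (size w)) = size v by rewrite size_factor_at.
have [+ _] := @s_balanced _ _ x (factor_at_is_factor q _) v_factor size_eq; lia.
Qed.

Lemma rich_occ_eq x w1 w2 : is_factor s w1 -> is_factor s w2 ->
  rich s x w1 -> rich s x w2 -> size w1 = size w2 -> occ x w1 = occ x w2.
Proof.
move=> [k1 def_w1] [k2 def_w2] rich1 rich2 same_size.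
have := rich_max k1 rich2; have := rich_max k2 rich1.
by rewrite -same_size -def_w1 same_size -def_w2; lia.
Qed.

Lemma no_two_deficits x (V : nat -> seq letter) K p q i j :
  (forall t, t < K -> occ x (factor_at s (p + start_pos V t) (size (V t)))
                      <= occ x (factor_at s (q + start_pos V t) (size (V t)))) ->
  i < j -> j < K ->
  occ x (factor_at s (p + start_pos V i) (size (V i)))
    < occ x (factor_at s (q + start_pos V i) (size (V i))) ->
  occ x (factor_at s (p + start_pos V j) (size (V j)))
    < occ x (factor_at s (q + start_pos V j) (size (V j))) -> False.
Proof.
move=> le_blocks lt_ij lt_jK lt_i lt_j.
have := sum_two_strict le_blocks lt_ij lt_jK lt_i lt_j; rewrite -!occ_blocks.
have size_eq : size (factor_at s p (start_pos V K)) = size (factor_at s q (start_pos V K)).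
  by rewrite !size_factor_at.
have [_ +] := @s_balanced _ _ x (factor_at_is_factor _ _) (factor_at_is_factor _ _) size_eq.
lia.
Qed.

End Windows.

Definition light (s : infword) (x : letter) (w : seq letter) (q : nat) : bool :=
  occ x (factor_at s q (size w)) < occ x w.

Section Sturmian.
Variable s : infword.
Hypothesis s_sturmian : sturmian s.

Let s_balanced : balanced s := s_sturmian.2.

(* Every non-empty word is rich in some letter: otherwise all windows of its
   length would have its a-count and s would be ultimately periodic.  Hence
   r_s picks a letter in which the word is rich. *)
Lemma rich_exists w : 0 < size w -> exists z, rich s z w.
Proof.
move=> w_nonempty; apply: NNPP => not_rich; apply: s_sturmian.1.
apply: (@constant_windows_periodic s la (size w) 0 (occ la w)) => // q _.
have window := factor_at_is_factor s q (size w).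
have count_w := occ_la_lb w.
have count_window := occ_la_lb (factor_at s q (size w)).
rewrite size_factor_at in count_window.
case: (ltngtP (occ la (factor_at s q (size w))) (occ la w)) => // cmp;
  exfalso; apply: not_rich; [exists la | exists lb];
  exists (factor_at s q (size w)); rewrite size_factor_at; do !split => //; lia.
Qed.

Lemma r_s_rich w : 0 < size w -> rich s (r_s s w) w.
Proof.
by move=> w_nonempty; apply: (epsilon_spec (inhabits la) (rich s^~ w)); apply: rich_exists.
Qed.

(* Light positions are unbounded, again by aperiodicity. *)
Lemma light_unbounded x w : rich s x w -> 0 < size w ->
  forall N, exists q, N <= q /\ light s x w q.
Proof.
move=> rich_w w_nonempty N; apply: NNPP => no_light; apply: s_sturmian.1.
apply: (@constant_windows_periodic s x (size w) N (occ x w)) => // q le_Nq.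
apply/eqP; rewrite eqn_leq rich_max //= leqNgt.
by apply/negP => light_q; apply: no_light; exists q.
Qed.

Lemma light_pair x w : rich s x w -> 0 < size w ->
  exists a D, 0 < D /\ light s x w a /\ light s x w (a + D * size w).
Proof.
move=> rich_w w_nonempty; set n := size w.
have next N : exists q, (N <= q) && light s x w q.
  by have [q [le_Nq light_q]] := light_unbounded rich_w w_nonempty N; exists q; apply/andP.
have nextP N : N <= xchoose (next N) /\ light s x w (xchoose (next N)).
  by apply/andP; exact: (xchooseP (next N)).
pose seq_light k := iter k (fun m => xchoose (next m.+1)) (xchoose (next 0)).
have seq_lightP k : light s x w (seq_light k).
  by case: k => [|k]; [exact: (nextP 0).2 | exact: (nextP (seq_light k).+1).2].
have seq_incr : {homo seq_light : k k' / k < k'}.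
  apply: homo_ltn => [? ? ?|k]; first exact: ltn_trans.
  exact: (nextP (seq_light k).+1).1.
have [k [k' [/andP [lt_kk' _] same_mod]]] :=
  @pigeonhole n (fun k => seq_light k %% n) (fun k _ => ltn_pmod _ w_nonempty).
have lt_ab := seq_incr _ _ lt_kk'.
have dvd_ab : n %| seq_light k' - seq_light k.
  by rewrite -(eqn_mod_dvd _ (ltnW lt_ab)) same_mod.
have D_gt0 : 0 < (seq_light k' - seq_light k) %/ n.
  by rewrite divn_gt0 // dvdn_leq // subn_gt0.
exists (seq_light k), ((seq_light k' - seq_light k) %/ n).
split=> //; rewrite divnK // (subnKC (ltnW lt_ab)).
by split; apply: seq_lightP.
Qed.

Lemma start_pos_const (w : seq letter) t : start_pos (fun=> w) t = t * size w.
Proof. by rewrite /start_pos sum_nat_const card_ord. Qed.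

(* Light positions have bounded gaps.  If the windows at q, q + n, ..., q + Dn
   were all heavy, the window of length (D+1)n at q would beat the one at the
   light pair a, a + Dn by two. *)
Lemma light_syndetic x w : rich s x w -> 0 < size w ->
  exists G, forall q, exists2 d, d < G & light s x w (q + d).
Proof.
move=> rich_w w_nonempty.
have [a [D [D_gt0 [light_a light_b]]]] := light_pair rich_w w_nonempty.
exists (D.+1 * size w) => q; apply: NNPP => no_light.
have heavy t : t < D.+1 -> occ x w <= occ x (factor_at s (q + t * size w) (size w)).
  move=> lt_tD; rewrite leqNgt; apply/negP => light_t; apply: no_light.
  by exists (t * size w); rewrite // ltn_mul2r w_nonempty.
apply: (@no_two_deficits s s_balanced x (fun=> w) D.+1 a q 0 D) => //.
- move=> t lt_tD; rewrite !start_pos_const.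
  exact: leq_trans (rich_max s_balanced _ rich_w) (heavy t lt_tD).
- by rewrite !start_pos_const mul0n addn0; apply: leq_trans light_a (heavy 0 _).
- by rewrite !start_pos_const; apply: leq_trans light_b (heavy D _).
Qed.

Section Factorization.
Variables (U : nat -> seq letter) (x : letter).
Hypotheses (U_factorization : is_factorization s U)
  (U_nonempty : forall i, 0 < size (U i)) (U_rich : forall i, rich s x (U i)).

Lemma factorization_factor_at i : factor_at s (start_pos U i) (size (U i)) = U i.
Proof.
apply: (@eq_from_nth _ la); rewrite ?size_factor_at // => k lt_k.
by rewrite /factor_at (nth_map 0) ?size_iota // nth_iota // U_factorization.
Qed.

Lemma factorization_is_factor i : is_factor s (U i).
Proof. by exists (start_pos U i); rewrite factorization_factor_at. Qed.

(* A gap bound for the light positions valid for all U_i of length <= M: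
   there are finitely many such lengths, and equally long U_i have the same
   light positions. *)
Lemma light_syndetic_upto M : exists G, forall i, size (U i) <= M ->
  forall q, exists2 d, d < G & light s x (U i) (q + d).
Proof.
elim: M => [|M [G1 short_G1]]; first by exists 0 => i; rewrite leqNgt U_nonempty.
have [[i0 size_i0]|no_i0] := classic (exists i0, size (U i0) = M.+1); last first.
  exists G1 => i le_iM; apply: short_G1.
  by move: le_iM; rewrite leq_eqVlt ltnS => /orP [/eqP size_i|] //; case: no_i0; exists i.
have [G2 syndetic_i0] := light_syndetic (U_rich i0) (U_nonempty i0).
exists (G1 + G2) => i le_iM q.
have [lt_Mi|le_iM'] := ltnP M (size (U i)); last first.
  by have [d lt_d light_d] := short_G1 i le_iM' q; exists d; rewrite // ltn_addr.
have same_size : size (U i) = size (U i0) by lia.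
have [d lt_d light_d] := syndetic_i0 q; exists d; first by rewrite ltn_addl.
rewrite /light same_size (rich_occ_eq s_balanced (factorization_is_factor i)
  (factorization_is_factor i0) (U_rich i) (U_rich i0) same_size).
exact: light_d.
Qed.

(* Two blocks U_i, U_j (i < j) cannot be light at the same offset d: the
   window of length |U_0 ... U_j| at d would have two fewer x's than the
   prefix U_0 ... U_j itself. *)
Lemma no_common_light_offset i j d : i < j ->
  light s x (U i) (start_pos U i + d) -> light s x (U j) (start_pos U j + d) -> False.
Proof.
move=> lt_ij light_i light_j.
have prefix t : factor_at s (0 + start_pos U t) (size (U t)) = U t.
  by rewrite add0n factorization_factor_at.
apply: (@no_two_deficits s s_balanced x U j.+1 d 0 i j) => [t _|//|//||];
  rewrite prefix addnC //; exact: rich_max.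
Qed.

End Factorization.
End Sturmian.

Theorem mainTheorem2 (s : infword) (U : nat -> seq letter) :
  sturmian s ->
  is_factorization s U ->
  (forall i, 0 < size (U i)) ->
  (forall i j, r_s s (U i) = r_s s (U j)) ->
  forall M : nat, 0 < M -> exists i, M < size (U i).
Proof.
move=> s_sturmian U_factorization U_nonempty same_r M _.
apply: NNPP => no_long.
have short i : size (U i) <= M.
  by rewrite leqNgt; apply/negP => long_i; apply: no_long; exists i.
pose x := r_s s (U 0).
have U_rich i : rich s x (U i).
  by rewrite /x -(same_r i 0); apply: r_s_rich.
have [G syndetic] := light_syndetic_upto s_sturmian U_factorization U_nonempty U_rich M.
have offset i : exists d, (d < G) && light s x (U i) (start_pos U i + d).
  by have [d lt_d light_d] := syndetic i (short i) (start_pos U i); exists d; apply/andP.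
pose d i := xchoose (offset i).
have offsetP i : d i < G /\ light s x (U i) (start_pos U i + d i).
  by apply/andP; exact: (xchooseP (offset i)).
have [i [j [/andP [lt_ij _] same_d]]] := @pigeonhole G d (fun i _ => (offsetP i).1).
apply: (no_common_light_offset s_sturmian U_factorization U_rich lt_ij (offsetP i).2).
by rewrite same_d; exact: (offsetP j).2.
Qed.
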